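(* Let $(V,E,\mu)$ be an infinite, connected, locally finite weighted graph, $o\in V$, and $p>0$. If $$\sum_{n=1}^\infty n\Big(\sum_{k=n}^\infty\frac{k}{\mu(B_k)}\Big)^p=\infty,$$ then $$\sum_{n=1}^\infty n\Big(\sum_{k=n}^\infty\frac1{b_k}\Big)^p=\infty.$$
   Context: Weighted graph: $\mu_{xy}=\mu_{yx}\ge0$, $\mu_{xy}>0$ iff $x\sim y$, $\mu(x)=\sum_{y\sim x}\mu_{xy}$, $\mu(A)=\sum_{x\in A}\mu(x)$. $d$ is graph distance, $B_k=\{x:d(o,x)\le k\}$, and $b_k=\sum_{x\in B_k,\,y\notin B_k,\,x\sim y}\mu_{xy}>0$. *)

From HB Require Import structures.
From mathcomp Require Import all_boot all_order all_algebra.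
From mathcomp Require Import all_classical all_reals all_analysis.
Set Implicit Arguments. Unset Strict Implicit. Unset Printing Implicit Defensive.
Import Order.TTheory GRing.Theory Num.Theory.
Local Open Scope classical_set_scope.
Local Open Scope ring_scope.

Section WeightedGraph.
Variables (R : realType) (V : choiceType) (mu : V -> V -> R).

Definition adj (x y : V) : bool := 0 < mu x y.

Definition weighted_graph : Prop :=
  (forall x y, mu x y = mu y x) /\ (forall x y, 0 <= mu x y).

Definition nbrs (x : V) : set V := [set y | adj x y].

Definition locally_finite : Prop := forall x, finite_set (nbrs x).

Definition connected_graph : Prop :=
  forall x y : V, exists s : seq V, path adj x s /\ last x s = y.

Definition infinite_graph : Prop := ~ finite_set [set: V].

Definition muv (x : V) : R := \sum_(y \in nbrs x) mu x y.

Definition muset (A : set V) : R := \sum_(x \in A) muv x.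

(* graph distance d(o,x) <= k  iff there is a walk of length <= k from o to x *)
Definition dist_le (o x : V) (k : nat) : Prop :=
  exists s : seq V, [/\ (size s <= k)%N, path adj o s & last o s = x].

Definition ball_k (o : V) (k : nat) : set V := [set x | dist_le o x k].

Definition bdry (o : V) (k : nat) : R :=
  \sum_(e \in [set e : V * V | [/\ ball_k o k e.1, ~ ball_k o k e.2 & adj e.1 e.2]])
     mu e.1 e.2.

End WeightedGraph.

(* Write M_k = mu(B_k).  Every edge leaving B_k joins B_k to the shell
   B_(k+1) \ B_k, so b_k <= M_k and b_k <= M_(k+1) - M_k.  Summed over the
   window ceil(k/2) <= i <= k this gives sum_i b_i <= 2 M_k, and the
   arithmetic-harmonic mean inequality turns it into
   k / M_k <= (8/k) sum_i 1/b_i.  An index i lies in at most i+1 windows,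
   each weighted by at most 8/i, so
   sum_(k>=n) k/M_k <= 16 sum_(i >= ceil(n/2)) 1/b_i.  Raising this to the
   power p and regrouping the indices n by ceil(n/2) costs a further factor 4. *)

From HB Require Import structures.
From mathcomp Require Import all_boot all_order all_algebra.
From mathcomp Require Import all_classical all_reals all_analysis.
From mathcomp Require Import ring lra zify.
Set Implicit Arguments. Unset Strict Implicit. Unset Printing Implicit Defensive.
Import Order.TTheory GRing.Theory Num.Theory.
Local Open Scope classical_set_scope.
Local Open Scope ring_scope.

Lemma ler_fsum (R : numDomainType) (T : choiceType) (P : set T) (f g : T -> R) :
  finite_set P -> (forall i, P i -> f i <= g i) ->
  \sum_(i \in P) f i <= \sum_(i \in P) g i.
Proof.
move=> P_fin f_le_g; rewrite !fsbig_finite //.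
rewrite big_seq [leRHS]big_seq; apply: ler_sum => i.
by rewrite in_fset_set // inE => /f_le_g.
Qed.

Lemma ler_fsum_subset (R : numDomainType) (T : choiceType) (P Q : set T) (f : T -> R) :
  (forall i, 0 <= f i) -> P `<=` Q -> finite_set (Q `&` f @^-1` [set~ 0]) ->
  \sum_(i \in P) f i <= \sum_(i \in Q) f i.
Proof.
move=> f_ge0 PQ Q_fin.
rewrite fsbig_supp [leRHS]fsbig_supp.
set P' := P `&` _; set Q' := Q `&` _.
have PQ' : P' `<=` Q' by move=> x [Px fx]; split => //; exact: PQ.
have P'_fin : finite_set P' := sub_finite_set PQ' Q_fin.
rewrite -(setDUK PQ') fsbigU0 //; last 2 first.
- exact: sub_finite_set (@subDsetl _ _ _) Q_fin.
- by move=> x [Px [_ nPx]].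
by rewrite lerDl fsumr_ge0.
Qed.

Lemma path_exit_edge (T : Type) (e : rel T) (B : set T) s x :
  B x -> path e x s -> ~ B (last x s) -> exists u v, [/\ B u, ~ B v & e u v].
Proof.
elim: s x => [|z s IH] x Bx //=.
case/andP => xz zs last_out.
have [Bz|nBz] := pselect (B z); first exact: IH Bz zs last_out.
by exists x, z.
Qed.

Section Balls.
Variables (R : realType) (V : choiceType) (mu : V -> V -> R) (o : V).

Lemma ball_k0 : ball_k mu o 0 = [set o].
Proof.
apply/seteqP; split => x /=; first by case => -[|? ?] [] //= _ _ <-.
by move=> ->; exists [::].
Qed.

Lemma ball_k_center k : ball_k mu o k o.
Proof. by exists [::]. Qed.

Lemma ball_k_subS k : ball_k mu o k `<=` ball_k mu o k.+1.
Proof. by move=> x [s [s_le s_path s_last]]; exists s; split => //; exact: leqW. Qed.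

Lemma ball_kS_adj k x y : ball_k mu o k x -> adj mu x y -> ball_k mu o k.+1 y.
Proof.
move=> [s [s_le s_path s_last]] xy; exists (rcons s y); split.
- by rewrite size_rcons.
- by rewrite rcons_path s_path s_last.
- by rewrite last_rcons.
Qed.

Lemma ball_kS_sub k :
  ball_k mu o k.+1 `<=` ball_k mu o k `|` \bigcup_(x in ball_k mu o k) nbrs mu x.
Proof.
move=> y [s [s_le s_path s_last]].
case/lastP: s s_le s_path s_last => [|s z]; first by left; exists [::].
rewrite size_rcons rcons_path last_rcons => s_le /andP[s_path sz] <-.
by right; exists (last o s) => //; exists s.
Qed.

Hypothesis lf : locally_finite mu.

Lemma ball_k_finite k : finite_set (ball_k mu o k).
Proof.
elim: k => [|k IH]; first by rewrite ball_k0; exact: finite_set1.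
apply: sub_finite_set (@ball_kS_sub k) _.
rewrite finite_setU; split => //.
by apply: bigcup_finite => // x _; exact: lf.
Qed.

Lemma ball_k_shell_finite k : finite_set (ball_k mu o k.+1 `\` ball_k mu o k).
Proof. exact: sub_finite_set (@subDsetl _ _ _) (ball_k_finite k.+1). Qed.

Hypothesis wg : weighted_graph mu.

Lemma muv_ge0 x : 0 <= muv mu x.
Proof. by case: wg => _ mu_ge0; apply: fsumr_ge0 => y _. Qed.

Lemma muset_ge0 A : 0 <= muset mu A.
Proof. by apply: fsumr_ge0 => x _; exact: muv_ge0. Qed.

Lemma fsum_le_muv x A : \sum_(y \in A) mu x y <= muv mu x.
Proof.
case: wg => _ mu_ge0.
have -> : muv mu x = \sum_(y \in [set: V]) mu x y.
  apply: fsbig_widen => // y [_ /= y_nadj]; apply/eqP.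
  by rewrite eq_le mu_ge0 andbT leNgt; apply/negP => /y_nadj.
apply: ler_fsum_subset => //.
apply: sub_finite_set (lf x) => y [_ /= mu_neq0].
by rewrite /nbrs /adj /= lt_def mu_ge0 andbT; apply/eqP.
Qed.

Lemma bdry_le_shell_sum k :
  bdry mu o k <= \sum_(e \in ball_k mu o k `*` (ball_k mu o k.+1 `\` ball_k mu o k)) mu e.1 e.2.
Proof.
case: wg => _ mu_ge0; apply: ler_fsum_subset.
- by move=> e; exact: mu_ge0.
- move=> [x y] /= [Bx nBy xy]; split => //=; split => //.
  exact: ball_kS_adj Bx xy.
- apply: sub_finite_set (@subIsetl _ _ _) _.
  exact: finite_setX (ball_k_finite k) (ball_k_shell_finite k).
Qed.

Lemma bdry_le_muset k : bdry mu o k <= muset mu (ball_k mu o k).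
Proof.
have [B_fin S_fin] := (ball_k_finite k, ball_k_shell_finite k).
apply: le_trans (bdry_le_shell_sum k) _.
rewrite -(pair_fsbig _ (fun x y => mu x y)) //.
by apply: ler_fsum => // x _; exact: fsum_le_muv.
Qed.

Lemma bdry_le_muset_shell k :
  bdry mu o k <= muset mu (ball_k mu o k.+1) - muset mu (ball_k mu o k).
Proof.
have [B_fin S_fin] := (ball_k_finite k, ball_k_shell_finite k).
apply: le_trans (bdry_le_shell_sum k) _.
rewrite -(pair_fsbig _ (fun x y => mu x y)) // exchange_fsbig //.
have -> : muset mu (ball_k mu o k.+1) - muset mu (ball_k mu o k)
    = muset mu (ball_k mu o k.+1 `\` ball_k mu o k).
  rewrite /muset -{1}(setDUK (@ball_k_subS k)) fsbigU0 //.
    by rewrite addrAC subrr add0r.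
  by move=> x [Bx [_ nBx]].
apply: ler_fsum => // y _.
case: wg => mu_sym _; under eq_fsbigr do rewrite mu_sym.
exact: fsum_le_muv.
Qed.

Lemma bdry_gt0 k : connected_graph mu -> infinite_graph V -> 0 < bdry mu o k.
Proof.
move=> cg ig.
have [y nBy] : exists y, ~ ball_k mu o k y.
  apply: contrapT => all_in; apply: ig.
  apply: sub_finite_set (ball_k_finite k) => x _.
  by apply: contrapT => nBx; apply: all_in; exists x.
have [s [s_path s_last]] := cg o y.
have [u [v [Bu nBv uv]]] : exists u v, [/\ ball_k mu o k u, ~ ball_k mu o k v & adj mu u v].
  by apply: path_exit_edge (ball_k_center k) s_path _; rewrite s_last.
apply: (@lt_le_trans _ _ (\sum_(e \in [set (u, v)]) mu e.1 e.2)); first by rewrite fsbig_set1.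
case: wg => _ mu_ge0; apply: ler_fsum_subset.
- by move=> e; exact: mu_ge0.
- by move=> e /= ->.
- apply: sub_finite_set (@subIsetl _ _ _) _.
  apply: (@sub_finite_set _ _ (ball_k mu o k `*` ball_k mu o k.+1)).
    by move=> [x z] /= [Bx nBz xz]; split => //; exact: ball_kS_adj Bx xz.
  exact: finite_setX (ball_k_finite k) (ball_k_finite k.+1).
Qed.

End Balls.

Lemma sqr_size_le_sum_mul_sum_inv (R : realFieldType) (I : Type) (r : seq I) (b : I -> R) :
  (forall i, 0 < b i) ->
  (size r)%:R ^+ 2 <= (\sum_(i <- r) b i) * \sum_(i <- r) (b i)^-1.
Proof.
move=> b_gt0; set B := \sum_(i <- r) b i; set m : R := (size r)%:R.
have tangent t : 2 * t * m - t ^+ 2 * B <= \sum_(i <- r) (b i)^-1.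
  rewrite /B /m -sum1_size natr_sum !mulr_sumr -sumrB; apply: ler_sum => i _.
  have bi0 : b i != 0 by rewrite gt_eqF.
  rewrite -subr_ge0.
  have -> : (b i)^-1 - (2 * t * 1 - t ^+ 2 * b i) = (1 - t * b i) ^+ 2 / b i by field.
  by rewrite divr_ge0 ?sqr_ge0 // ltW.
case: r @B @m tangent => [|i0 r] B m tangent; first by rewrite /m /B !big_nil /= expr0n mul0r.
have B_gt0 : 0 < B by rewrite /B big_cons ltr_pwDl // sumr_ge0 // => i _; exact: ltW.
have -> : m ^+ 2 = B * (2 * (m / B) * m - (m / B) ^+ 2 * B).
  by field; rewrite gt_eqF.
by rewrite ler_pM2l // tangent.
Qed.

Lemma ratio_le_window_sum_inv (R : realFieldType) (b M : nat -> R) k :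
  (forall i, 0 < b i) -> (forall i, 0 <= M i) ->
  (forall i, b i <= M i) -> (forall i, b i <= M i.+1 - M i) ->
  k%:R / M k <= 8 / k%:R * \sum_((k.+1)./2 <= i < k.+1) (b i)^-1.
Proof.
move=> b_gt0 M_ge0 b_le_M b_le_dM.
have [->|k_gt0] := posnP k; first by rewrite !mul0r invr0 mulr0 mul0r.
set h := (k.+1)./2; set A := \sum_(h <= i < k.+1) (b i)^-1.
set B := \sum_(h <= i < k.+1) b i; set m : R := (k.+1 - h)%:R.
have M_gt0 : 0 < M k := lt_le_trans (b_gt0 k) (b_le_M k).
have kR_gt0 : 0 < k%:R :> R by rewrite ltr0n.
have A_ge0 : 0 <= A by rewrite sumr_ge0 // => i _; rewrite invr_ge0 ltW.
have B_le : B <= 2 * M k.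
  have h_le_k : (h <= k)%N by rewrite /h; lia.
  rewrite /B big_nat_recr //=.
  have : \sum_(h <= i < k) b i <= \sum_(h <= i < k) (M i.+1 - M i).
    by apply: ler_sum => i _.
  rewrite telescope_sumr //.
  by have := b_le_M k; have := M_ge0 h; lra.
have k_le_2m : k%:R <= 2 * m by rewrite /m -natrM ler_nat /h; lia.
have m2_le : m ^+ 2 <= B * A.
  by have := sqr_size_le_sum_mul_sum_inv (index_iota h k.+1) b_gt0; rewrite size_iota.
have k2_le : k%:R ^+ 2 <= 8 * M k * A by nra.
have -> : k%:R / M k = k%:R ^+ 2 / (k%:R * M k) by field; rewrite !gt_eqF.
have -> : 8 / k%:R * A = 8 * M k * A / (k%:R * M k) by field; rewrite !gt_eqF.
by rewrite ler_wpM2r // invr_ge0 mulr_ge0 // ltW.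
Qed.

Lemma big_nat_widen_mkcond (V : nmodType) lo hi lo' hi' (F : nat -> V) :
  (lo <= lo')%N -> (hi' <= hi)%N ->
  \sum_(lo' <= i < hi') F i = \sum_(lo <= i < hi) (if (lo' <= i < hi')%N then F i else 0).
Proof.
move=> lo_le hi_ge.
rewrite (big_nat_widenl _ lo) // (big_nat_widen _ _ hi) // big_mkcond /=.
by apply: eq_bigr => i _; rewrite andbC.
Qed.

Lemma count_window_le n N i :
  (count (fun k => (k.+1)./2 <= i <= k)%N (index_iota n N) <= i.+1)%N.
Proof.
rewrite -size_filter.
have -> : i.+1 = size (index_iota i (i.*2).+1) by rewrite size_iota; lia.
apply: uniq_leq_size; first by rewrite filter_uniq // iota_uniq.
by move=> k; rewrite mem_filter !mem_index_iota => /andP[/andP[]]; lia.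
Qed.

Lemma window_weight_sum_le (R : realFieldType) n N i :
  \sum_(n <= k < N | ((k.+1)./2 <= i <= k)%N) 8 / k%:R <= 16 :> R.
Proof.
have [->|i_gt0] := posnP i.
  rewrite big1 // => k /andP[k_small _].
  have -> : k = 0%N by lia.
  by rewrite invr0 mulr0.
have iR_gt0 : 0 < i%:R :> R by rewrite ltr0n.
apply: (@le_trans _ _ (\sum_(n <= k < N | ((k.+1)./2 <= i <= k)%N) 8 / i%:R)).
  apply: ler_sum => k /andP[_ i_le_k].
  by rewrite ler_pM2l // lef_pV2 ?posrE ?ler_nat // ltr0n (leq_trans i_gt0).
rewrite big_const_seq iter_addr_0.
apply: (@le_trans _ _ (8 / i%:R *+ i.+1)).
  by apply: ler_wpMn2l; [rewrite divr_ge0 | exact: count_window_le].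
rewrite -mulr_natr mulrAC ler_pdivrMr // -natr1.
have : 1 <= i%:R :> R by rewrite ler1n.
lra.
Qed.

Lemma sum_le_window_sum (R : realFieldType) (a c : nat -> R) n N :
  (forall i, 0 <= a i) ->
  (forall k, c k <= 8 / k%:R * \sum_((k.+1)./2 <= i < k.+1) a i) ->
  \sum_(n <= k < N) c k <= 16 * \sum_((n.+1)./2 <= i < N) a i.
Proof.
move=> a_ge0 c_le.
pose w k i : R := if ((k.+1)./2 <= i <= k)%N then 8 / k%:R else 0.
have window k : (n <= k < N)%N ->
    8 / k%:R * \sum_((k.+1)./2 <= i < k.+1) a i = \sum_((n.+1)./2 <= i < N) w k i * a i.
  move=> /andP[n_le_k k_lt_N].
  rewrite mulr_sumr (@big_nat_widen_mkcond _ (n.+1)./2 N); [|lia|lia].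
  by apply: eq_bigr => i _; rewrite /w ltnS; case: ifP; rewrite ?mul0r.
rewrite mulr_sumr.
apply: (@le_trans _ _ (\sum_(n <= k < N) \sum_((n.+1)./2 <= i < N) w k i * a i)).
  rewrite !big_nat; apply: ler_sum => k k_in.
  by rewrite -(window k k_in); exact: c_le.
rewrite exchange_big_nat /=; apply: ler_sum => i _.
rewrite -mulr_suml ler_wpM2r //.
by apply: le_trans (window_weight_sum_le R n N i); rewrite [leRHS]big_mkcond.
Qed.

Section TailSeries.
Local Open Scope ereal_scope.

Lemma lee_nneseries_of_partial_sums (R : realType) (a c : nat -> R) (C : R) n m :
  (forall k, (0 <= c k)%R) -> (forall k, (0 <= a k)%R) -> (0 <= C)%R ->
  (forall N, \sum_(n <= k < N) c k <= C * \sum_(m <= k < N) a k)%R ->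
  \sum_(n <= k <oo) (c k)%:E <= C%:E * \sum_(m <= k <oo) (a k)%:E.
Proof.
move=> c_ge0 a_ge0 C_ge0 partial.
apply: lime_le; first by apply: is_cvg_ereal_nneg_natsum => k _; rewrite lee_fin.
apply: nearW => N.
rewrite (@sumEFin R).
apply: (@le_trans _ _ (C * \sum_(m <= k < N) a k)%:E); first by rewrite lee_fin.
rewrite EFinM -(@sumEFin R); apply: lee_wpmul2l; first by rewrite lee_fin.
by apply: nneseries_lim_ge => k _ _; rewrite lee_fin.
Qed.

Lemma nneseries_uphalf_le (R : realType) (g : nat -> \bar R) :
  (forall m, 0 <= g m) ->
  \sum_(1 <= n <oo) n%:R%:E * g (n.+1)./2 <= 4%:E * \sum_(1 <= m <oo) m%:R%:E * g m.
Proof.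
move=> g_ge0.
have term_ge0 m : 0 <= m%:R%:E * g m by rewrite mule_ge0 ?lee_fin.
have partial K : \sum_(1 <= n < K.*2.+1) n%:R%:E * g (n.+1)./2
                 <= 4%:E * \sum_(1 <= m < K.+1) m%:R%:E * g m.
  elim: K => [|K IH]; first by rewrite !big_geq // mule0.
  rewrite doubleS big_nat_recr // big_nat_recr // [X in _ <= _ * X]big_nat_recr //=.
  rewrite doubleK uphalf_double ge0_muleDr ?sume_ge0 // -addeA leeD //.
  rewrite -ge0_muleDl ?lee_fin // muleA -EFinM lee_wpmul2r // lee_fin -natrD -natrM ler_nat.
  lia.
apply: lime_le; first by apply: is_cvg_nneseries => n _ _; rewrite mule_ge0 ?lee_fin.
apply: nearW => N.
apply: (@le_trans _ _ (\sum_(1 <= n < N.*2.+1) n%:R%:E * g (n.+1)./2)).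
  by apply: lee_sum_nneg_natr => [n _ _|]; [rewrite mule_ge0 ?lee_fin | lia].
apply: le_trans (partial N) _; rewrite lee_wpmul2l ?lee_fin //.
exact: nneseries_lim_ge.
Qed.

Lemma weighted_tail_pow_series_eqy (R : realType) (a c : nat -> R) (C p : R) :
  (forall k, (0 <= a k)%R) -> (forall k, (0 <= c k)%R) -> (0 < C)%R -> (0 <= p)%R ->
  (forall n, \sum_(n <= k <oo) (c k)%:E <= C%:E * \sum_((n.+1)./2 <= k <oo) (a k)%:E) ->
  \sum_(1 <= n <oo) n%:R%:E * (\sum_(n <= k <oo) (c k)%:E) `^ p = +oo ->
  \sum_(1 <= n <oo) n%:R%:E * (\sum_(n <= k <oo) (a k)%:E) `^ p = +oo.
Proof.
move=> a_ge0 c_ge0 C_gt0 p_ge0 tail_le c_infty.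
pose S m := \sum_(m <= k <oo) (a k)%:E.
have S_ge0 m : 0 <= S m by apply: nneseries_ge0 => k _ _; rewrite lee_fin.
have term_le n : n%:R%:E * (\sum_(n <= k <oo) (c k)%:E) `^ p
                 <= (C `^ p)%:E * (n%:R%:E * S (n.+1)./2 `^ p).
  rewrite muleCA lee_wpmul2l ?lee_fin // -poweR_EFin -poweRM ?lee_fin ?(ltW C_gt0) //.
  have T_ge0 : 0 <= \sum_(n <= k <oo) (c k)%:E.
    by apply: nneseries_ge0 => k _ _; rewrite lee_fin.
  apply: gt0_ler_poweR (tail_le n) => //.
  - by rewrite in_itv /= leey andbT.
  - by rewrite in_itv /= leey andbT mule_ge0 ?lee_fin ?(ltW C_gt0) ?(S_ge0 (n.+1)./2).
have K_gt0 : (0 < C `^ p * 4)%R by rewrite mulr_gt0 ?powR_gt0.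
apply/eqP; rewrite -leye_eq -(@lee_pmul2l _ (C `^ p * 4)%:E) ?lte_fin // gt0_muley ?lte_fin //.
rewrite -c_infty EFinM -muleA; apply: le_trans (lee_nneseries _ (fun n _ => term_le n)) _.
  by move=> n _ _; rewrite mule_ge0 ?lee_fin ?poweR_ge0.
rewrite nneseriesZl => [|n _]; last by rewrite mule_ge0 ?lee_fin ?poweR_ge0.
by rewrite lee_wpmul2l ?lee_fin ?powR_ge0 // nneseries_uphalf_le // => m; exact: poweR_ge0.
Qed.

End TailSeries.

Theorem lemma6p10 (R : realType) (V : choiceType) (mu : V -> V -> R) (o : V) (p : R) :
  weighted_graph mu -> locally_finite mu -> connected_graph mu -> infinite_graph V ->
  0 < p ->
  (\sum_(1 <= n <oo)
      (n%:R%:E * (\sum_(n <= k <oo) (k%:R / muset mu (ball_k mu o k))%:E) `^ p))%E = +oo%E ->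
  (\sum_(1 <= n <oo)
      (n%:R%:E * (\sum_(n <= k <oo) (1 / bdry mu o k)%:E) `^ p))%E = +oo%E.
Proof.
move=> wg lf cg ig p_gt0.
have b_gt0 k : 0 < bdry mu o k by exact: bdry_gt0.
have a_ge0 k : 0 <= 1 / bdry mu o k by rewrite divr_ge0 // ltW.
have c_ge0 k : 0 <= k%:R / muset mu (ball_k mu o k) by rewrite divr_ge0 // muset_ge0.
apply: (@weighted_tail_pow_series_eqy _ _ _ 16) => //; first exact: ltW.
move=> n; apply: lee_nneseries_of_partial_sums => // N.
apply: sum_le_window_sum => // k; under eq_bigr do rewrite div1r.
apply: (ratio_le_window_sum_inv (M := fun k => muset mu (ball_k mu o k))) => // i.
- exact: muset_ge0.
- exact: bdry_le_muset.
- exact: bdry_le_muset_shell.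
Qed.
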